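(* Consider the Data Revocation Game with negligible unlearning cost, and assume $d_i^{\max}=d^{\max}$ for all $i$ and $m_1<m_2<\dots<m_I$, where $m_i=(\xi_i\ell_i)^{-1}-\epsilon_i$. Then every Nash equilibrium $(d_i^* )$ satisfies $d_1^*\le d_2^*\le\dots\le d_I^*$.
   Context: Data Revocation Game with negligible unlearning cost: a finite set of users $\mathcal I=\{1,\dots,I\}$, $I\ge 2$, each with parameters $d_i^{\max}>0$, $\epsilon_i>0$, $\xi_i>0$, $\ell_i>0$. Each user chooses $d_i\in[0,d_i^{\max}]$, with payoff $U_i(d_i,\boldsymbol{d_{-i}})=\ln\big(\sum_{j\in\mathcal I}d_j+\epsilon_i\big)-\xi_i d_i\ell_i$. A Nash equilibrium is a profile $(d_i^* )$ with $d_i^*\in[0,d_i^{\max}]$ and $U_i(d_i^*,\boldsymbol{d_{-i}^*})\ge U_i(d_i,\boldsymbol{d_{-i}^*})$ for all $i$ and $d_i\in[0,d_i^{\max}]$. The quantity $m_i=(\xi_i\ell_i)^{-1}-\epsilon_i$ is called the remaining metric of user $i$. *)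

(* concrete reals R. Users are indexed by 0 .. I-1 (paper: 1..I). *)
From Stdlib Require Import Reals Lra Lia.
Open Scope R_scope.

Fixpoint total (I : nat) (d : nat -> R) : R :=
  match I with
  | O => 0
  | S n => total n d + d n
  end.

Definition update (d : nat -> R) (i : nat) (x : R) : nat -> R :=
  fun j => if Nat.eqb j i then x else d j.

Definition payoff (I : nat) (eps xi l : nat -> R) (i : nat) (d : nat -> R) : R :=
  ln (total I d + eps i) - xi i * d i * l i.

Definition is_NE (I : nat) (dmax eps xi l : nat -> R) (d : nat -> R) : Prop :=
  forall i, (i < I)%nat ->
    (0 <= d i <= dmax i) /\
    forall x, 0 <= x <= dmax i ->
      payoff I eps xi l i (update d i x) <= payoff I eps xi l i d.

Definition remaining_metric (eps xi l : nat -> R) (i : nat) : R :=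
  / (xi i * l i) - eps i.

(* Under a fixed profile of the others, user i maximises x |-> ln (K + x) - c x
   on [0, d_max], where c = xi_i l_i and K = (others' total) + eps_i.  This
   concave objective increases exactly while K + x < 1/c, so at an equilibrium
   the aggregate S = sum_j d_j satisfies S <= m_i whenever d_i > 0 (user i
   does not gain by decreasing) and m_i <= S whenever d_i < d_max (user i does
   not gain by increasing).  If d_i > d_(i+1), both apply, to i and to i+1
   respectively, giving m_(i+1) <= S <= m_i, against m_i < m_(i+1). *)
From Stdlib Require Import Reals Lra Lia.
Open Scope R_scope.

Lemma ln_sub_le (y z : R) : 0 < y -> 0 < z -> ln y - ln z <= (y - z) / z.
Proof.
  intros Hy Hz.
  pose proof (exp_ineq1_le (ln y - ln z)) as Hexp.
  unfold Rminus in Hexp at 2.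
  rewrite exp_plus, exp_Ropp, !exp_ln in Hexp by lra.
  replace ((y - z) / z) with (y * / z - 1) by (field; lra).
  lra.
Qed.

Lemma le_of_forall_small_sub_le (a y z : R) :
  0 < a -> (forall s, 0 < s <= a -> y - s <= z) -> y <= z.
Proof.
  intros Ha Hsmall.
  destruct (Rle_dec y z) as [|Hyz]; [assumption|].
  apply Rnot_le_lt in Hyz.
  pose proof (Rmin_l a ((y - z) / 2)) as Hmin_a.
  pose proof (Rmin_r a ((y - z) / 2)) as Hmin_yz.
  assert (Hpos : 0 < Rmin a ((y - z) / 2)) by (apply Rmin_glb_lt; lra).
  pose proof (Hsmall (Rmin a ((y - z) / 2)) ltac:(lra)).
  lra.
Qed.

Lemma le_inv_of_mul_le_1 (c w : R) : 0 < c -> c * w <= 1 -> w <= / c.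
Proof.
  intros Hc Hcw. apply (Rmult_le_reg_l c); [assumption|].
  rewrite Rinv_r by lra. assumption.
Qed.

Lemma inv_le_of_1_le_mul (c w : R) : 0 < c -> 1 <= c * w -> / c <= w.
Proof.
  intros Hc Hcw. apply (Rmult_le_reg_l c); [assumption|].
  rewrite Rinv_r by lra. assumption.
Qed.

Lemma log_linear_max_le_inv (K c a : R) :
  0 < K -> 0 < c -> 0 < a ->
  (forall x, 0 <= x <= a -> ln (K + x) - c * x <= ln (K + a) - c * a) ->
  K + a <= / c.
Proof.
  intros HK Hc Ha Hmax.
  apply (le_of_forall_small_sub_le a); [assumption|].
  intros s Hs.
  pose proof (Hmax (a - s) ltac:(lra)) as Hdecrease.
  pose proof (ln_sub_le (K + a) (K + (a - s)) ltac:(lra) ltac:(lra)) as Hln.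
  replace ((K + a - (K + (a - s))) / (K + (a - s)))
    with (s / (K + a - s)) in Hln by (field; lra).
  assert (Hgain : c * s * (K + a - s) <= s / (K + a - s) * (K + a - s))
    by (apply Rmult_le_compat_r; lra).
  replace (s / (K + a - s) * (K + a - s)) with s in Hgain by (field; lra).
  apply le_inv_of_mul_le_1; [assumption|nra].
Qed.

Lemma log_linear_max_ge_inv (K c a D : R) :
  0 < K -> 0 < c -> 0 <= a < D ->
  (forall x, a <= x <= D -> ln (K + x) - c * x <= ln (K + a) - c * a) ->
  / c <= K + a.
Proof.
  intros HK Hc Ha Hmax.
  apply (le_of_forall_small_sub_le (D - a)); [lra|].
  intros s Hs.
  pose proof (Hmax (a + s) ltac:(lra)) as Hincrease.
  pose proof (ln_sub_le (K + a) (K + (a + s)) ltac:(lra) ltac:(lra)) as Hln.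
  replace ((K + a - (K + (a + s))) / (K + (a + s)))
    with (- (s / (K + a + s))) in Hln by (field; lra).
  assert (Hloss : s / (K + a + s) * (K + a + s) <= c * s * (K + a + s))
    by (apply Rmult_le_compat_r; lra).
  replace (s / (K + a + s) * (K + a + s)) with s in Hloss by (field; lra).
  assert (1 <= c * (K + a + s)) by nra.
  assert (/ c <= K + a + s) by (apply inv_le_of_1_le_mul; assumption).
  lra.
Qed.

Lemma total_update (n : nat) (d : nat -> R) (i : nat) (x : R) :
  (i < n)%nat -> total n (update d i x) = total n d - d i + x.
Proof.
  assert (Hbelow : forall k, (k <= i)%nat -> total k (update d i x) = total k d).
  { induction k as [|k IH]; intros Hk; simpl; [reflexivity|].
    rewrite IH by lia. unfold update.
    replace (Nat.eqb k i) with false by (symmetry; apply Nat.eqb_neq; lia).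
    reflexivity. }
  induction n as [|n IH]; intros Hi; [lia|]. simpl.
  unfold update at 2.
  destruct (Nat.eqb n i) eqn:Hni.
  - apply Nat.eqb_eq in Hni; subst n.
    rewrite Hbelow by lia. lra.
  - apply Nat.eqb_neq in Hni. rewrite IH by lia. lra.
Qed.

Lemma le_total (n : nat) (d : nat -> R) (i : nat) :
  (forall k, (k < n)%nat -> 0 <= d k) -> (i < n)%nat -> d i <= total n d.
Proof.
  induction n as [|n IH]; intros Hnonneg Hi; [lia|]. simpl.
  assert (Htotal : 0 <= total n d).
  { clear IH Hi. induction n as [|n IH']; simpl; [lra|].
    pose proof (Hnonneg n ltac:(lia)).
    assert (0 <= total n d) by (apply IH'; intros; apply Hnonneg; lia).
    lra. }
  pose proof (Hnonneg n ltac:(lia)).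
  destruct (Nat.eq_dec i n) as [->|Hin]; [lra|].
  assert (d i <= total n d) by (apply IH; [intros; apply Hnonneg|]; lia).
  lra.
Qed.

Section Equilibrium.

Variables (I : nat) (dmax eps xi l d : nat -> R).
Hypothesis d_NE : is_NE I dmax eps xi l d.

Lemma NE_le_total (i : nat) : (i < I)%nat -> d i <= total I d.
Proof.
  apply le_total. intros k Hk. apply (d_NE k Hk).
Qed.

Lemma NE_best_response (i : nat) : (i < I)%nat ->
  forall x, 0 <= x <= dmax i ->
    ln (total I d - d i + eps i + x) - xi i * l i * x
    <= ln (total I d - d i + eps i + d i) - xi i * l i * d i.
Proof.
  intros Hi x Hx.
  pose proof (proj2 (d_NE i Hi) x Hx) as Hdev.
  unfold payoff in Hdev. rewrite total_update in Hdev by exact Hi.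
  unfold update in Hdev. rewrite Nat.eqb_refl in Hdev.
  replace (total I d - d i + eps i + d i) with (total I d + eps i) by ring.
  replace (total I d - d i + eps i + x) with (total I d - d i + x + eps i) by ring.
  lra.
Qed.

Lemma NE_total_le_metric (i : nat) : (i < I)%nat ->
  0 < eps i -> 0 < xi i * l i -> 0 < d i ->
  total I d <= remaining_metric eps xi l i.
Proof.
  intros Hi Heps Hc Hdi.
  pose proof (NE_le_total i Hi).
  assert (Hbound : total I d - d i + eps i + d i <= / (xi i * l i)).
  { apply log_linear_max_le_inv; [lra | assumption | assumption |].
    intros x Hx. apply (NE_best_response i Hi).
    pose proof (proj1 (d_NE i Hi)). lra. }
  unfold remaining_metric. lra.
Qed.

Lemma NE_metric_le_total (i : nat) : (i < I)%nat ->
  0 < eps i -> 0 < xi i * l i -> d i < dmax i ->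
  remaining_metric eps xi l i <= total I d.
Proof.
  intros Hi Heps Hc Hdi.
  pose proof (NE_le_total i Hi).
  pose proof (proj1 (d_NE i Hi)).
  assert (Hbound : / (xi i * l i) <= total I d - d i + eps i + d i).
  { apply (log_linear_max_ge_inv _ _ _ (dmax i)); [lra | assumption | lra |].
    intros x Hx. apply (NE_best_response i Hi). lra. }
  unfold remaining_metric. lra.
Qed.

End Equilibrium.

Theorem proposition4 (I : nat) (dmax eps xi l : nat -> R) (Dmax : R) :
  (2 <= I)%nat ->
  (forall i, (i < I)%nat ->
     0 < dmax i /\ 0 < eps i /\ 0 < xi i /\ 0 < l i) ->
  (forall i, (i < I)%nat -> dmax i = Dmax) ->
  (forall i, (S i < I)%nat ->
     remaining_metric eps xi l i < remaining_metric eps xi l (S i)) ->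
  forall d : nat -> R, is_NE I dmax eps xi l d ->
  forall i, (S i < I)%nat -> d i <= d (S i).
Proof.
  intros _ Hpos Hdmax Hmetric d Hne i Hi.
  destruct (Rle_dec (d i) (d (S i))) as [|Hlt]; [assumption|].
  apply Rnot_le_lt in Hlt. exfalso.
  destruct (Hpos i ltac:(lia)) as [_ [Heps_i [Hxi_i Hl_i]]].
  destruct (Hpos (S i) Hi) as [_ [Heps_Si [Hxi_Si Hl_Si]]].
  pose proof (proj1 (Hne (S i) Hi)).
  pose proof (proj1 (Hne i ltac:(lia))).
  assert (Hi_up : total I d <= remaining_metric eps xi l i).
  { apply (NE_total_le_metric I dmax); [assumption | lia | assumption | | lra].
    apply Rmult_lt_0_compat; assumption. }
  assert (HSi_down : remaining_metric eps xi l (S i) <= total I d).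
  { apply (NE_metric_le_total I dmax); [assumption | assumption | assumption | |].
    - apply Rmult_lt_0_compat; assumption.
    - rewrite (Hdmax (S i) Hi), <- (Hdmax i ltac:(lia)). lra. }
  pose proof (Hmetric i Hi). lra.
Qed.
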